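(* For every instance \(\mathcal{I}\) of 3-SAT, the graph \(G(\mathcal{I})\) constructed below is weakly chordal.
   Context: A graph is weakly chordal if neither it nor its complement contains an induced cycle of length at least 5. Let \(\mathcal{I}\) have variables \(x_1,\dots,x_k\) and clauses \(C_1,\dots,C_l\), each a disjunction of three literals. \(G(\mathcal{I})\) has vertices: literal vertices \(X=\{x_1,\dots,x_k,\overline{x_1},\dots,\overline{x_k}\}\), clause vertices \(c_1,\dots,c_l\), and six vertices \(r,p,q,a,b,t\). Edges: any two vertices of \(X\) are adjacent except the pairs \(x_j\overline{x_j}\); the clause vertices are pairwise nonadjacent; \(c_i\) is adjacent to every vertex of \(X\) except the three literal vertices of the literals of \(C_i\); each of \(r,p,q,a\) is adjacent to all literal vertices and all clause vertices; \(b\) is adjacent to all literal vertices; additionally the edges \(ab,ap,aq,bq,br,bt,pr,qr,qt\); no other edges. *)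

From mathcomp Require Import all_boot.
Set Implicit Arguments. Unset Strict Implicit. Unset Printing Implicit Defensive.

Definition compl_rel (T : finType) (e : rel T) : rel T :=
  fun x y => (x != y) && ~~ e x y.

Definition induced_cycle (T : finType) (e : rel T) (n : nat) (f : 'I_n -> T) : Prop :=
  injective f /\
  forall i j : 'I_n, i != j ->
    e (f i) (f j) = (((i.+1 %% n)%N == j) || ((j.+1 %% n)%N == i)).

Definition has_long_hole (T : finType) (e : rel T) : Prop :=
  exists n : nat, (5 <= n)%N /\ exists f : 'I_n -> T, induced_cycle e f.

Definition weakly_chordal (T : finType) (e : rel T) : Prop :=
  ~ has_long_hole e /\ ~ has_long_hole (compl_rel e).

(* literal = (variable index, polarity); (j, true) is x_j, (j, false) is ~x_j *)
Definition literal (k : nat) := ('I_k * bool)%type.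

Definition instance (k l : nat) := 'I_l -> 3.-tuple (literal k).

Definition vr : 'I_6 := @Ordinal 6 0 isT.
Definition vp : 'I_6 := @Ordinal 6 1 isT.
Definition vq : 'I_6 := @Ordinal 6 2 isT.
Definition va : 'I_6 := @Ordinal 6 3 isT.
Definition vb : 'I_6 := @Ordinal 6 4 isT.
Definition vt : 'I_6 := @Ordinal 6 5 isT.

(* vertices: literal vertices X, clause vertices c_i, special vertices *)
Definition vertex (k l : nat) := ((literal k + 'I_l) + 'I_6)%type.

Definition special_edges : seq ('I_6 * 'I_6) :=
  [:: (va, vb); (va, vp); (va, vq); (vb, vq); (vb, vr); (vb, vt);
      (vp, vr); (vq, vr); (vq, vt)].

Definition special_adj (s s' : 'I_6) : bool :=
  ((s, s') \in special_edges) || ((s', s) \in special_edges).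

Definition special_lit (s : 'I_6) : bool := s \in [:: vr; vp; vq; va; vb].
Definition special_clause (s : 'I_6) : bool := s \in [:: vr; vp; vq; va].

Definition G_adj (k l : nat) (I : instance k l) : rel (vertex k l) :=
  fun u v =>
  match u, v with
  | inl (inl x), inl (inl y) => x.1 != y.1
  | inl (inl x), inl (inr i) => x \notin I i
  | inl (inr i), inl (inl x) => x \notin I i
  | inl (inr _), inl (inr _) => false
  | inl (inl _), inr s => special_lit s
  | inr s, inl (inl _) => special_lit s
  | inl (inr _), inr s => special_clause s
  | inr s, inl (inr _) => special_clause s
  | inr s, inr s' => special_adj s s'
  end.

From mathcomp Require Import all_boot zify.
Set Implicit Arguments. Unset Strict Implicit. Unset Printing Implicit Defensive.

(* Every vertex of a hole (an induced cycle of length at least 5) has two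
   neighbours and two non-neighbours on it and no third neighbour, and the hole
   contains no triangle and no two vertices with two common neighbours.  These
   local conditions exclude r, p, q, a and t from a hole of G or of its
   complement, since each of them has too few neighbours or non-neighbours.
   In the complement the clauses form a clique and a literal is adjacent to no
   literal but its negation, so any hole closes a triangle or a 4-cycle.  In G,
   a hole through b or through a clause meets the literals in a single
   complementary pair, which then has two common neighbours on the hole; and a
   hole made of literals alone is impossible, since among the literals each one
   is non-adjacent only to its negation. *)

Definition two_nbrs (T : finType) (e : rel T) (H : {pred T}) : Prop :=
  forall u, u \in H -> exists v w, [/\ v \in H, w \in H, v != w, e u v & e u w].

Lemma two_nbrs_avoid (T : finType) (e : rel T) (H : {pred T}) u x :
  two_nbrs e H -> u \in H -> exists2 w, w \in H & e u w && (w != x).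
Proof.
move=> nbrs /nbrs [v [w [Hv Hw vw euv euw]]].
have [vx | vx] := eqVneq v x; last by exists v; rewrite ?euv.
by exists w; rewrite // euw -vx eq_sym.
Qed.

Lemma two_nbrs_notin (T : finType) (e : rel T) (H : {pred T}) u x :
  two_nbrs e H -> (forall w, w \in H -> e u w -> w = x) -> u \notin H.
Proof.
move=> nbrs only_x; apply/negP => /(two_nbrs_avoid x nbrs) [w Hw /andP[euw]].
by rewrite (only_x w Hw euw) eqxx.
Qed.

Lemma two_nbrs_sub (T : finType) (e e' : rel T) (H : {pred T}) :
  subrel e e' -> two_nbrs e H -> two_nbrs e' H.
Proof.
move=> ee' nbrs u /nbrs [v [w [Hv Hw vw euv euw]]].
by exists v, w; split; rewrite ?ee'.
Qed.

Lemma compl_rel_irr (T : finType) (e : rel T) : irreflexive (compl_rel e).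
Proof. by move=> x; rewrite /compl_rel eqxx. Qed.

Lemma compl_rel_sym (T : finType) (e : rel T) : symmetric e -> symmetric (compl_rel e).
Proof. by move=> e_sym x y; rewrite /compl_rel eq_sym e_sym. Qed.

Lemma compl_compl_rel_sub (T : finType) (e : rel T) : subrel (compl_rel (compl_rel e)) e.
Proof. by move=> x y /andP[xy]; rewrite /compl_rel xy negbK. Qed.

Record hole_shape (T : finType) (e : rel T) (H : {pred T}) : Prop := HoleShape {
  hole_two_nbrs : two_nbrs e H;
  hole_two_non_nbrs : two_nbrs (compl_rel e) H;
  hole_third_nbr : forall u v1 v2 v3, u \in H -> v1 \in H -> v2 \in H -> v3 \in H ->
    v1 != v2 -> e u v1 -> e u v2 -> e u v3 -> v3 = v1 \/ v3 = v2;
  hole_triangle_free : forall u v w, u \in H -> v \in H -> w \in H ->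
    e u v -> e v w -> ~~ e u w;
  hole_C4_free : forall u w y z, u \in H -> w \in H -> y \in H -> z \in H ->
    u != w -> y != z -> e u y -> e u z -> e w y -> e w z -> False }.

Section InducedCycle.
Variables (T : finType) (e : rel T) (n : nat) (f : 'I_n -> T).
Hypotheses (n_ge5 : 5 <= n) (e_irr : irreflexive e) (f_cycle : induced_cycle e f).

Definition cycle_adj (i j : nat) : Prop :=
  i.+1 = j \/ j.+1 = i \/ (i.+1 = n /\ j = 0) \/ (j.+1 = n /\ i = 0).

Lemma succ_modn (i : 'I_n) : i.+1 %% n = if i.+1 == n then 0 else i.+1.
Proof.
by case: eqP => [->|ne]; rewrite ?modnn // modn_small //; have := ltn_ord i; lia.
Qed.

Lemma cycle_adjE (i j : 'I_n) : e (f i) (f j) <-> cycle_adj i j.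
Proof.
have := ltn_ord i; have := ltn_ord j; rewrite /cycle_adj.
have [<- | ij] := eqVneq i j; first by rewrite e_irr; split => //; lia.
rewrite f_cycle.2 // !succ_modn.
by case: (i.+1 =P n); case: (j.+1 =P n) => /=; split; lia.
Qed.

Lemma cycle_neq (i j : 'I_n) : (f i != f j) = (i != j :> nat).
Proof. by rewrite (inj_eq f_cycle.1). Qed.

Lemma cycle_shift (i : 'I_n) d : d < n ->
  exists j : 'I_n, j = i + d :> nat \/ j + n = i + d :> nat.
Proof.
have := ltn_ord i; case: (ltnP (i + d) n) => [lt | ge] lti ltd.
  by exists (Ordinal lt); left.
have lt : i + d - n < n by lia.
by exists (Ordinal lt); right => /=; lia.
Qed.

Local Notation H := [in codom f].

Lemma induced_cycle_hole_shape : hole_shape e H.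
Proof.
split.
- move=> _ /codomP [i ->].
  have [j1 j1E] := @cycle_shift i 1 (ltac:(lia)).
  have [j2 j2E] := @cycle_shift i n.-1 (ltac:(lia)).
  have := ltn_ord i; have := ltn_ord j1; have := ltn_ord j2 => *.
  exists (f j1), (f j2); split; rewrite ?codom_f ?cycle_neq //;
    try apply/cycle_adjE; rewrite /cycle_adj; lia.
- move=> _ /codomP [i ->].
  have [j1 j1E] := @cycle_shift i 2 (ltac:(lia)).
  have [j2 j2E] := @cycle_shift i 3 (ltac:(lia)).
  have := ltn_ord i; have := ltn_ord j1; have := ltn_ord j2 => *.
  exists (f j1), (f j2); split; rewrite ?codom_f /compl_rel ?cycle_neq //;
    try (apply/andP; split; last apply/negP => /cycle_adjE; rewrite /cycle_adj); lia.
- move=> _ _ _ _ /codomP [i ->] /codomP [j1 ->] /codomP [j2 ->] /codomP [j3 ->].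
  rewrite cycle_neq => /eqP ne /cycle_adjE a1 /cycle_adjE a2 /cycle_adjE a3.
  suff : j3 = j1 :> nat \/ j3 = j2 :> nat by case=> /val_inj ->; [left | right].
  have := ltn_ord i; have := ltn_ord j1; have := ltn_ord j2; have := ltn_ord j3.
  move: a1 a2 a3; rewrite /cycle_adj; lia.
- move=> _ _ _ /codomP [i ->] /codomP [j1 ->] /codomP [j2 ->].
  move=> /cycle_adjE a1 /cycle_adjE a2; apply/negP => /cycle_adjE.
  have := ltn_ord i; have := ltn_ord j1; have := ltn_ord j2.
  move: a1 a2; rewrite /cycle_adj; lia.
- move=> _ _ _ _ /codomP [i ->] /codomP [j1 ->] /codomP [j2 ->] /codomP [j3 ->].
  rewrite !cycle_neq => /eqP d1 /eqP d2.
  move=> /cycle_adjE a1 /cycle_adjE a2 /cycle_adjE a3 /cycle_adjE a4.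
  have := ltn_ord i; have := ltn_ord j1; have := ltn_ord j2; have := ltn_ord j3.
  move: a1 a2 a3 a4; rewrite /cycle_adj; lia.
Qed.

End InducedCycle.

Lemma no_long_hole (T : finType) (e : rel T) : irreflexive e ->
  (forall H : {pred T}, hole_shape e H -> forall v, v \notin H) -> ~ has_long_hole e.
Proof.
move=> e_irr hole_empty [n [n_ge5 [f f_cycle]]].
have n_gt0 : 0 < n by lia.
have := hole_empty _ (induced_cycle_hole_shape n_ge5 e_irr f_cycle) (f (Ordinal n_gt0)).
by rewrite codom_f.
Qed.

Lemma neg_lit_unique k (x y z : literal k) :
  x.1 = y.1 -> x.1 = z.1 -> x != y -> x != z -> y = z.
Proof.
case: x y z => [i []] [j []] [j' []] /= <- <- //; by rewrite eqxx.
Qed.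

Section Graph.
Variables (k l : nat) (I : instance k l).
Local Notation vertex := (vertex k l).
Local Notation G := (G_adj I).
Local Notation Gc := (compl_rel (G_adj I)).
Local Notation lit x := (inl (inl x) : vertex).
Local Notation cls c := (inl (inr c) : vertex).
Local Notation spc s := (inr s : vertex).

Ltac case_vertex v := case: v => [[?|?]|[[|[|[|[|[|[|?]]]]]] ?]] //=.

Lemma G_sym : symmetric G.
Proof. move=> u v; case_vertex u; case_vertex v; by rewrite eq_sym. Qed.

Lemma G_irr : irreflexive G.
Proof. move=> u; case_vertex u; by rewrite eqxx. Qed.

Lemma G_t_nbr v : G (spc vt) v = (v == spc vb) || (v == spc vq).
Proof. by case_vertex v. Qed.

Lemma Gc_q_nbr v : Gc (spc vq) v = (v == spc vp).
Proof. by case_vertex v. Qed.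

Lemma Gc_p_nbr v : Gc (spc vp) v = [|| v == spc vb, v == spc vq | v == spc vt].
Proof. by case_vertex v. Qed.

Lemma Gc_r_nbr v : Gc (spc vr) v = (v == spc va) || (v == spc vt).
Proof. by case_vertex v. Qed.

Lemma Gc_a_nbr v : Gc (spc va) v = (v == spc vr) || (v == spc vt).
Proof. by case_vertex v. Qed.

Lemma Gc_lit x y : Gc (lit x) (lit y) = (x != y) && (x.1 == y.1).
Proof. by rewrite /compl_rel /= negbK. Qed.

(* A hole of G and a hole of its complement both give each of their vertices
   two G-neighbours and two G-non-neighbours on the hole. *)
Lemma hole_special_eq_b (H : {pred vertex}) :
  two_nbrs G H -> two_nbrs Gc H -> forall s, spc s \in H -> s = vb.
Proof.
move=> nbrs non_nbrs.
have q_off : spc vq \notin H.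
  by apply: (two_nbrs_notin (x := spc vp) non_nbrs) => w _; rewrite Gc_q_nbr => /eqP.
have t_off : spc vt \notin H.
  apply: (two_nbrs_notin (x := spc vb) nbrs) => w Hw; rewrite G_t_nbr.
  by case/orP=> /eqP // wq; rewrite -wq Hw in q_off.
have p_off : spc vp \notin H.
  apply: (two_nbrs_notin (x := spc vb) non_nbrs) => w Hw; rewrite Gc_p_nbr.
  by case/or3P=> /eqP // w_qt; rewrite -w_qt Hw in q_off t_off.
have r_off : spc vr \notin H.
  apply: (two_nbrs_notin (x := spc va) non_nbrs) => w Hw; rewrite Gc_r_nbr.
  by case/orP=> /eqP // wt; rewrite -wt Hw in t_off.
have a_off : spc va \notin H.
  apply: (two_nbrs_notin (x := spc vr) non_nbrs) => w Hw; rewrite Gc_a_nbr.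
  by case/orP=> /eqP // wt; rewrite -wt Hw in t_off.
case=> [[|[|[|[|[|[|m]]]]]] lt6] //; rewrite (bool_irrelevance lt6 isT) => Hs;
  by [exact: val_inj | rewrite Hs in r_off p_off q_off a_off t_off].
Qed.

Section HoleOfG.
Variable H : {pred vertex}.
Hypothesis hole : hole_shape G H.

Let spc_on_hole : forall s, spc s \in H -> s = vb :=
  hole_special_eq_b (hole_two_nbrs hole) (hole_two_non_nbrs hole).

Lemma G_hole_edge_lit u v : u \in H -> v \in H -> G u v ->
  (exists x, u = lit x) \/ (exists x, v = lit x).
Proof.
case: u => [[x|c]|s] Hu Hv; first by left; exists x.
- case: v Hv => [[y|d]|s] Hv //; first by right; exists y.
  by rewrite (spc_on_hole Hv).
- rewrite (spc_on_hole Hu); case: v Hv => [[y|d]|s'] Hv //; first by right; exists y.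
  by rewrite (spc_on_hole Hv) G_irr.
Qed.

(* A second hole-neighbour d of x is adjacent to y too, so u, x, d, y is a 4-cycle. *)
Lemma G_hole_two_lits_absurd u x y : u \in H -> lit x \in H -> lit y \in H -> x != y ->
  G u (lit x) -> G u (lit y) -> (forall z, lit z \in H -> z = x \/ z = y) -> False.
Proof.
move=> Hu Hx Hy xy ux uy cover.
have xy_non : ~~ G (lit x) (lit y).
  by apply: (hole_triangle_free hole Hx Hu Hy); rewrite // G_sym.
have [d Hd /andP[xd du]] := two_nbrs_avoid u (hole_two_nbrs hole) Hx.
have dy : G d (lit y).
  case: d Hd xd du => [[z|c]|s] Hd xd du.
  - by case: (cover z Hd) xd => ->; rewrite ?G_irr // => xy'; rewrite xy' in xy_non.
  - have [v [w [Hv Hw vw cv cw]]] := hole_two_nbrs hole Hd.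
    have [[? //] | [z1 vz1]] := G_hole_edge_lit Hd Hv cv.
    have [[? //] | [z2 wz2]] := G_hole_edge_lit Hd Hw cw.
    subst v w; case: (cover z1 Hv) cv vw => -> // _.
    by case: (cover z2 Hw) cw => -> //; rewrite eqxx.
  - by rewrite (spc_on_hole Hd).
apply: (hole_C4_free hole Hu Hd Hx Hy _ xy ux uy _ dy); first by rewrite eq_sym.
by rewrite G_sym.
Qed.

Lemma b_notin_G_hole : spc vb \notin H.
Proof.
apply/negP => Hb.
have [v [w [Hv Hw vw bv bw]]] := hole_two_nbrs hole Hb.
have [[? //] | [x vx]] := G_hole_edge_lit Hb Hv bv.
have [[? //] | [y wy]] := G_hole_edge_lit Hb Hw bw.
subst v w; apply: (G_hole_two_lits_absurd Hb Hv Hw vw bv bw) => z Hz.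
by case: (hole_third_nbr hole Hb Hv Hw Hz vw bv bw isT) => -[->]; [left | right].
Qed.

Lemma cls_notin_G_hole c : cls c \notin H.
Proof.
apply/negP => Hc.
have [v [w [Hv Hw vw cv cw]]] := hole_two_nbrs hole Hc.
have [[? //] | [x vx]] := G_hole_edge_lit Hc Hv cv.
have [[? //] | [y wy]] := G_hole_edge_lit Hc Hw cw.
subst v w; apply: (G_hole_two_lits_absurd Hc Hv Hw vw cv cw) => z Hz.
have /negPn/eqP xy_var : ~~ G (lit x) (lit y).
  by apply: (hole_triangle_free hole Hv Hc Hw); rewrite // G_sym.
have [-> | zx] := eqVneq z x; first by left.
have [-> | zy] := eqVneq z y; first by right.
have zx_var : z.1 != x.1.
  apply: contraNneq zy => zx_var; apply/eqP.
  by apply: (neg_lit_unique (x := x)); rewrite // eq_sym.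
exfalso; apply: (hole_C4_free hole Hc Hz Hv Hw _ vw cv cw) => //=.
by rewrite -xy_var.
Qed.

Lemma spc_notin_G_hole s : spc s \notin H.
Proof.
apply/negP => Hs.
by have s_b := spc_on_hole Hs; rewrite s_b (negbTE b_notin_G_hole) in Hs.
Qed.

Lemma lit_notin_G_hole x : lit x \notin H.
Proof.
apply/negP => Hx.
have hole_lit v : v \in H -> exists y, v = lit y.
  case: v => [[y|c]|s] Hv; first by exists y.
    by rewrite (negbTE (cls_notin_G_hole c)) in Hv.
  by rewrite (negbTE (spc_notin_G_hole s)) in Hv.
have [v [w [Hv Hw vw /andP[xv xv_non] /andP[xw xw_non]]]] := hole_two_non_nbrs hole Hx.
have [y vy] := hole_lit v Hv; have [z wz] := hole_lit w Hw; subst v w.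
move: xv_non xw_non => /negPn/eqP xv_var /negPn/eqP xw_var.
by rewrite (neg_lit_unique xv_var xw_var xv xw) eqxx in vw.
Qed.

Lemma G_hole_empty v : v \notin H.
Proof.
case: v => [[x|c]|s];
  [exact: lit_notin_G_hole | exact: cls_notin_G_hole | exact: spc_notin_G_hole].
Qed.

End HoleOfG.

Lemma Gc_sym : symmetric Gc.
Proof. exact: compl_rel_sym G_sym. Qed.

Lemma Gc_cls c d : c != d -> Gc (cls c) (cls d).
Proof. by rewrite /compl_rel => ->. Qed.

Lemma Gc_lit_nbr_uniq x y z : Gc (lit x) (lit y) -> Gc (lit x) (lit z) -> y = z.
Proof.
rewrite !Gc_lit => /andP[xy /eqP xy_var] /andP[xz /eqP xz_var].
exact: neg_lit_unique xy_var xz_var xy xz.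
Qed.

Section HoleOfCompl.
Variable H : {pred vertex}.
Hypothesis hole : hole_shape Gc H.

Let spc_on_hole : forall s, spc s \in H -> s = vb :=
  hole_special_eq_b (two_nbrs_sub (@compl_compl_rel_sub _ G) (hole_two_non_nbrs hole))
    (hole_two_nbrs hole).

Lemma b_notin_Gc_hole : spc vb \notin H.
Proof.
apply/negP => Hb.
have cls_nbr v : v \in H -> Gc (spc vb) v -> exists c, v = cls c.
  case: v => [[x|c]|s] Hv /andP[bv] //; first by exists c.
  by rewrite (spc_on_hole Hv) eqxx in bv.
have [v [w [Hv Hw vw bv bw]]] := hole_two_nbrs hole Hb.
have [c vc] := cls_nbr v Hv bv; have [d wd] := cls_nbr w Hw bw; subst v w.
by move: (hole_triangle_free hole Hb Hv Hw bv (Gc_cls vw)); rewrite bw.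
Qed.

Lemma Gc_hole_lit_or_cls v : v \in H -> (exists x, v = lit x) \/ (exists c, v = cls c).
Proof.
case: v => [[x|c]|s] Hv; [by left; exists x | by right; exists c | ].
by have s_b := spc_on_hole Hv; rewrite s_b (negbTE b_notin_Gc_hole) in Hv.
Qed.

(* The path c - x - y - d of the hole closes into a triangle or a 4-cycle
   because the clauses form a clique. *)
Lemma Gc_hole_lit_cls_absurd x c : lit x \in H -> cls c \in H -> Gc (lit x) (cls c) -> False.
Proof.
move=> Hx Hc xc; have cx : Gc (cls c) (lit x) by rewrite Gc_sym.
have [w Hw /andP[xw wc]] := two_nbrs_avoid (cls c) (hole_two_nbrs hole) Hx.
case: (Gc_hole_lit_or_cls Hw) => [[y wy] | [d wd]]; subst w; last first.
  by move/negP: (hole_triangle_free hole Hc Hx Hw cx xw); apply; apply: Gc_cls; rewrite eq_sym.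
have [w Hw' /andP[yw wx]] := two_nbrs_avoid (lit x) (hole_two_nbrs hole) Hw.
case: (Gc_hole_lit_or_cls Hw') => [[z wz] | [d wd]]; subst w.
  by rewrite Gc_sym in xw; rewrite (Gc_lit_nbr_uniq xw yw) eqxx in wx.
have [dc | dc] := eqVneq d c.
  by subst d; move/negP: (hole_triangle_free hole Hc Hx Hw cx xw); apply; rewrite Gc_sym.
by apply: (hole_C4_free hole Hx Hw' Hc Hw _ _ xc xw (Gc_cls dc)); rewrite // Gc_sym.
Qed.

Lemma cls_notin_Gc_hole c : cls c \notin H.
Proof.
apply/negP => Hc.
have [v [w [Hv Hw vw cv cw]]] := hole_two_nbrs hole Hc.
case: (Gc_hole_lit_or_cls Hv) => [[x vx] | [d vd]]; subst v.
  by apply: (Gc_hole_lit_cls_absurd Hv Hc); rewrite Gc_sym.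
case: (Gc_hole_lit_or_cls Hw) => [[y wy] | [d' wd]]; subst w.
  by apply: (Gc_hole_lit_cls_absurd Hw Hc); rewrite Gc_sym.
have dc : Gc (cls d) (cls c) by rewrite Gc_sym.
by move/negP: (hole_triangle_free hole Hv Hc Hw dc cw); apply; apply: Gc_cls.
Qed.

Lemma Gc_hole_empty v : v \notin H.
Proof.
apply/negP => Hv; case: (Gc_hole_lit_or_cls Hv) => [[x vx] | [c vc]]; subst v; last first.
  by rewrite (negbTE (cls_notin_Gc_hole c)) in Hv.
have [v [w [Hv' Hw vw xv xw]]] := hole_two_nbrs hole Hv.
case: (Gc_hole_lit_or_cls Hv') => [[y vy] | [c vc]]; subst v; last first.
  by rewrite (negbTE (cls_notin_Gc_hole c)) in Hv'.
case: (Gc_hole_lit_or_cls Hw) => [[z wz] | [c wc]]; subst w; last first.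
  by rewrite (negbTE (cls_notin_Gc_hole c)) in Hw.
by rewrite (Gc_lit_nbr_uniq xv xw) eqxx in vw.
Qed.

End HoleOfCompl.

End Graph.

Theorem lemma13 (k l : nat) (I : instance k l) : weakly_chordal (G_adj I).
Proof.
split; apply: no_long_hole.
- exact: G_irr.
- exact: G_hole_empty.
- exact: compl_rel_irr.
- exact: Gc_hole_empty.
Qed.
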